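(* Let $\mathbb{F}$ be a field, $n\ge1$ and $k\ge2$. For every flag $\mathcal{F}$ in $\mathbb{F}^n$ of length $k$, the semigroup $\varphi(\mathcal{F})$ is a $k$-maximal nilpotent subsemigroup of $M(n,\mathbb{F})$. Conversely, every $k$-maximal nilpotent subsemigroup of $M(n,\mathbb{F})$ equals $\varphi(\mathcal{F})$ for some flag $\mathcal{F}$ in $\mathbb{F}^n$ of length $k$.
   Context: $M(n,\mathbb{F})$ is the semigroup of $n\times n$ matrices over $\mathbb{F}$ under multiplication, identified with linear operators on $\mathbb{F}^n$. A flag in $\mathbb{F}^n$ of length $k$ is a chain of subspaces $0=V_0\subsetneq V_1\subsetneq\cdots\subsetneq V_k=\mathbb{F}^n$, and $\varphi(\mathcal{F})=\{a\in M(n,\mathbb{F}) : a(V_i)\subseteq V_{i-1}\text{ for all } i=1,\dots,k\}$. A semigroup $S$ with zero $0$ is nilpotent of nilpotency degree $k$ if $a_1\cdots a_k=0$ for all $a_j\in S$ and some product $b_1\cdots b_{k-1}$ of elements of $S$ is nonzero. A nilpotent subsemigroup of $M(n,\mathbb{F})$ of nilpotency degree $k$ is $k$-maximal if it is not properly contained in any other nilpotent subsemigroup of $M(n,\mathbb{F})$ of nilpotency degree $k$. *)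

From HB Require Import structures.
From mathcomp Require Import all_boot all_order all_algebra.
Set Implicit Arguments. Unset Strict Implicit. Unset Printing Implicit Defensive.
Import GRing.Theory.
Local Open Scope ring_scope.

(* M(n,F) for n >= 1 is modelled as 'M[F]_n.+1 (a ring).  Vectors of F^n are
   row vectors; a matrix a acts by v |-> v *m a, and subspaces of F^n are
   represented by row spaces of square matrices (mxalgebra, scope %MS). *)

Definition is_flag (F : fieldType) (n : nat) (V : nat -> 'M[F]_n.+1) (k : nat) : Prop :=
  (V 0%N == (0 : 'M[F]_n.+1))%MS /\ (V k == 1%:M)%MS /\ (forall i, (i < k)%N -> (V i < V i.+1)%MS).

Definition phi (F : fieldType) (n : nat) (V : nat -> 'M[F]_n.+1) (k : nat)
  (a : 'M[F]_n.+1) : Prop :=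
  forall i, (0 < i <= k)%N -> (V i *m a <= V i.-1)%MS.

Definition subsemigroup (F : fieldType) (n : nat) (S : 'M[F]_n.+1 -> Prop) :=
  forall a b, S a -> S b -> S (a * b).

Definition nilpotent_of_degree (F : fieldType) (n : nat)
  (S : 'M[F]_n.+1 -> Prop) (k : nat) : Prop :=
  [/\ subsemigroup S, S 0,
      (forall a : 'I_k -> 'M[F]_n.+1, (forall i, S (a i)) -> \prod_(i < k) a i = 0)
    & exists b : 'I_k.-1 -> 'M[F]_n.+1, (forall i, S (b i)) /\ \prod_(i < k.-1) b i != 0].

Definition k_maximal (F : fieldType) (n : nat) (S : 'M[F]_n.+1 -> Prop) (k : nat) : Prop :=
  nilpotent_of_degree S k /\
  forall T : 'M[F]_n.+1 -> Prop, nilpotent_of_degree T k ->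
    (forall a, S a -> T a) -> forall a, T a -> S a.

From mathcomp Require Import all_boot all_order all_algebra.
From mathcomp Require Import zify.
From Stdlib Require Import Classical ClassicalEpsilon.

(* Every element of phi(V) moves V_i into V_(i-1), so k such factors send
   F^n = V_k into V_0 = 0.  A rank-one map sending a vector outside V_q to any
   vector of V_q lies in phi(V); chaining such maps gives nonzero products of
   k-1 elements, and any t moving a row of some V_i outside V_(i-1) can be
   padded by them into a nonzero product of length k, whence maximality.
   Conversely, for S nilpotent of degree k the spaces W_j = F^n S^j decrease
   from F^n to W_k = 0 with W_j S <= W_(j+1); an equality W_j = W_(j+1) would
   propagate to W_j = W_k = 0, contradicting W_(k-1) <> 0.  So V_i = W_(k-i)
   is a flag with S <= phi(V), and k-maximality of S gives equality. *)

Set Implicit Arguments. Unset Strict Implicit. Unset Printing Implicit Defensive.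
Import GRing.Theory.
Local Open Scope ring_scope.

Section Products.

Variables (F : fieldType) (n : nat).
Local Notation M := 'M[F]_n.+1.

Lemma prod_nth (s : seq M) : \prod_(i < size s) nth 0 s i = \prod_(a <- s) a.
Proof. by rewrite (big_nth 0) big_mkord. Qed.

Lemma prod_ord m (a : 'I_m -> M) :
  \prod_(i < m) a i = \prod_(b <- [seq a i | i <- enum 'I_m]) b.
Proof. by rewrite big_map enumT. Qed.

Lemma mulmx_prod_cons m (x : 'M[F]_(m, n.+1)) a (s : seq M) :
  x *m \prod_(b <- a :: s) b = x *m a *m \prod_(b <- s) b.
Proof. by rewrite big_cons mulmxA. Qed.

Lemma mulmx_prod_rcons m (x : 'M[F]_(m, n.+1)) (s : seq M) a :
  x *m \prod_(b <- rcons s a) b = x *m \prod_(b <- s) b *m a.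
Proof. by rewrite -cats1 big_cat big_seq1 mulmxA. Qed.

Lemma nilpotent_of_degreeP (S : M -> Prop) k : nilpotent_of_degree S k <->
  [/\ subsemigroup S, S 0,
      forall s, size s = k -> {in s, forall a, S a} -> \prod_(a <- s) a = 0
    & exists s, [/\ size s = k.-1, {in s, forall a, S a} & \prod_(a <- s) a != 0]].
Proof.
split=> -[mulS S0 Sk [b Sb]].
  split=> // [s sz_s Ss|].
    by subst k; rewrite -prod_nth; apply: Sk => i; apply/Ss/mem_nth.
  case: Sb => Sb nz_b; exists [seq b i | i <- enum 'I_k.-1].
  by rewrite size_map size_enum_ord -prod_ord; split=> // _ /mapP[i _ ->].
split=> // [a Sa|].
  by rewrite prod_ord; apply: Sk; [rewrite size_map size_enum_ord | move=> _ /mapP[i _ ->]].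
case: Sb => sz_b Sb nz_b; rewrite -sz_b; exists (fun i => nth 0 b i).
by rewrite prod_nth; split=> // i; apply/Sb/mem_nth.
Qed.

End Products.

Section Flag.

Variables (F : fieldType) (n k : nat) (V : nat -> 'M[F]_n.+1).
Hypothesis flagV : is_flag V k.
Local Notation phiV := (phi V k).

Lemma flag0 : V 0%N = 0.
Proof. by case: flagV => /andP[V0 _] _; apply/eqP; rewrite -submx0. Qed.

Lemma flag_full : (1%:M <= V k)%MS.
Proof. by case: flagV => _ [/andP[_ ->]]. Qed.

Lemma flag_mono i j : (i <= j <= k)%N -> (V i <= V j)%MS.
Proof.
case/andP; elim: j => [|j IHj]; first by rewrite leqn0 => /eqP ->.
rewrite leq_eqVlt => /orP[/eqP -> // | ltij] ltjk.
apply: submx_trans (IHj ltij (ltnW ltjk)) _.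
by case: flagV => _ [_ /(_ j ltjk)/ltmxW].
Qed.

Lemma flag_witness q : (q < k)%N ->
  exists2 z : 'rV[F]_n.+1, (z <= V q.+1)%MS & ~~ (z <= V q)%MS.
Proof.
case: flagV => _ [_ /[apply]]; rewrite ltmxE => /andP[_ /row_subPn[r Vr]].
by exists (row r (V q.+1)); rewrite ?row_sub.
Qed.

Lemma phi_sub a j : phiV a -> (j <= k)%N -> (V j *m a <= V j.-1)%MS.
Proof.
case: j => [_ _ | j phi_a ltjk]; first by rewrite flag0 mul0mx sub0mx.
exact: phi_a.
Qed.

Lemma phi_mul : subsemigroup phiV.
Proof.
move=> a b phi_a phi_b i /andP[i_gt0 leik]; rewrite -mulmxE mulmxA.
apply: submx_trans (submxMr _ (phi_a i _)) _; first by rewrite i_gt0.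
apply: submx_trans (phi_sub phi_b _) _; first lia.
apply: flag_mono; lia.
Qed.

Lemma phi_prod s j : {in s, forall a, phiV a} -> (j <= k)%N ->
  (V j *m \prod_(a <- s) a <= V (j - size s))%MS.
Proof.
elim: s j => [|a s IHs] j phi_s lejk; first by rewrite big_nil mulmx1 subn0.
rewrite mulmx_prod_cons (_ : (j - size (a :: s) = j.-1 - size s)%N) /=; last lia.
apply: submx_trans (submxMr _ (phi_sub (phi_s a (mem_head _ _)) lejk)) _.
by apply: IHs; [move=> b s_b; apply: phi_s; rewrite in_cons s_b orbT | lia].
Qed.

Lemma phi_transport q (z x : 'rV[F]_n.+1) : (q <= k)%N ->
  ~~ (z <= V q)%MS -> (x <= V q)%MS -> exists2 a, phiV a & z *m a = x.
Proof.
move=> leqk Vz Vx; set c := z *m cokermx (V q).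
have free_c : row_free c by rewrite /row_free rank_rV /c -submxE Vz.
exists (cokermx (V q) *m pinvmx c *m x); last by rewrite 2!mulmxA -/c mulmxVp // mul1mx.
move=> i /andP[_ leik]; case: (leqP i q) => [leiq | ltqi].
  have /eqP Vi0 : V i *m cokermx (V q) == 0 by rewrite -submxE flag_mono ?leiq.
  by rewrite 2!mulmxA Vi0 !mul0mx sub0mx.
by rewrite mulmxA (submx_trans (submxMl _ _)) // (submx_trans Vx) // flag_mono //; lia.
Qed.

Lemma phi_prod_neq0 p (x : 'rV[F]_n.+1) : (p <= k)%N -> ~~ (x <= V p)%MS ->
  exists s, [/\ size s = p, {in s, forall a, phiV a} & x *m \prod_(a <- s) a != 0].
Proof.
elim: p x => [|p IHp] x lepk Vx.
  by exists [::]; rewrite big_nil mulmx1; split=> //; apply: contraNneq Vx => ->; rewrite sub0mx.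
have [z Vz notVz] := flag_witness lepk.
have [a phi_a xa] := phi_transport lepk Vx Vz.
have [s [sz_s phi_s nz_zs]] := IHp z (ltnW lepk) notVz.
exists (a :: s); rewrite /= sz_s mulmx_prod_cons xa; split=> //.
by move=> b; rewrite in_cons => /orP[/eqP -> | /phi_s].
Qed.

Lemma phi_prod_onto q r (x : 'rV[F]_n.+1) : (x <= V q)%MS -> (q + r <= k)%N ->
  exists y s, [/\ size s = r, {in s, forall a, phiV a} & y *m \prod_(a <- s) a = x].
Proof.
elim: r q x => [|r IHr] q x Vx leqrk.
  by exists x, [::]; rewrite big_nil mulmx1.
have ltqk : (q < k)%N by lia.
have [z Vz notVz] := flag_witness ltqk.
have [a phi_a za] := phi_transport (ltnW ltqk) notVz Vx.
have [|y [s [sz_s phi_s ys]]] := IHr q.+1 z Vz; first lia.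
exists y, (rcons s a); rewrite size_rcons sz_s mulmx_prod_rcons ys za; split=> //.
by move=> b; rewrite mem_rcons in_cons => /orP[/eqP -> | /phi_s].
Qed.

Lemma phi_nilpotent : (0 < k)%N -> nilpotent_of_degree phiV k.
Proof.
move=> k_gt0; apply/nilpotent_of_degreeP; split.
- exact: phi_mul.
- by move=> i _; rewrite mulmx0 sub0mx.
- move=> s sz_s phi_s; apply/eqP; rewrite -submx0 -(mul1mx (\prod_(a <- s) a)).
  have := phi_prod phi_s (leqnn k); rewrite sz_s subnn flag0.
  exact: submx_trans (submxMr _ flag_full).
- have [|z Vz notVz] := @flag_witness k.-1; first by rewrite ltn_predL.
  have [s [sz_s phi_s nz_zs]] := phi_prod_neq0 (leq_pred k) notVz.
  by exists s; split=> //; apply: contraNneq nz_zs => ->; rewrite mulmx0.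
Qed.

Lemma phi_maximal (T : 'M[F]_n.+1 -> Prop) : nilpotent_of_degree T k ->
  (forall a, phiV a -> T a) -> forall a, T a -> phiV a.
Proof.
move=> /nilpotent_of_degreeP[_ _ Tk _] phiT t Tt i /andP[i_gt0 leik].
apply: contraT => /row_subPn[j]; rewrite row_mul => notVrt.
have [|y [s1 [sz_s1 phi_s1 ys1]]] := @phi_prod_onto i (k - i) _ (row_sub j (V i)).
  lia.
have [|s2 [sz_s2 phi_s2 nz]] := phi_prod_neq0 _ notVrt; first lia.
suff prod0 : \prod_(a <- s1 ++ t :: s2) a = 0.
  have : y *m \prod_(a <- s1 ++ t :: s2) a = row j (V i) *m t *m \prod_(a <- s2) a.
    by rewrite big_cat mulmxA ys1 mulmx_prod_cons.
  by rewrite prod0 mulmx0 => /esym nz0; rewrite nz0 eqxx in nz.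
apply: Tk; first by rewrite size_cat /= sz_s1 sz_s2; lia.
by move=> a; rewrite mem_cat in_cons => /or3P[/phi_s1/phiT | /eqP -> | /phi_s2/phiT].
Qed.

End Flag.

Section Span.

Variables (F : fieldType) (n : nat).
Implicit Types (G : 'rV[F]_n -> Prop) (N : 'M[F]_n).

Lemma exists_span G : exists M : 'M[F]_n,
  (forall v, G v -> (v <= M)%MS) /\ forall N, (forall v, G v -> (v <= N)%MS) -> (M <= N)%MS.
Proof.
pose below (M : 'M[F]_n) := forall N, (forall v, G v -> (v <= N)%MS) -> (M <= N)%MS.
have below0 : below 0 by move=> N _; apply: sub0mx.
move: below0; move: (0 : 'M_n) => M.
have [m lt_M] := ubnP (n - \rank M); elim: m M lt_M => // m IHm M lt_M belowM.
case: (classic (forall v, G v -> (v <= M)%MS)) => [GM | ]; first by exists M.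
move=> /not_all_ex_not[v nGv]; have [Gv notMv] := imply_to_and _ _ nGv.
have ltMv : (M < M + v)%MS.
  by rewrite ltmxE addsmxSl; apply/negP => MvM; apply/notMv/(submx_trans (addsmxSr M v)).
apply: (IHm (M + v)%MS).
  by have := rank_ltmx ltMv; have := rank_leq_col (M + v)%MS; lia.
by move=> N GN; rewrite addsmx_sub belowM // GN.
Qed.

Definition span G : 'M[F]_n :=
  proj1_sig (constructive_indefinite_description _ (exists_span G)).

Lemma span_sub G v : G v -> (v <= span G)%MS.
Proof. exact: (proj2_sig (constructive_indefinite_description _ (exists_span G))).1. Qed.

Lemma span_min G N : (forall v, G v -> (v <= N)%MS) -> (span G <= N)%MS.
Proof. exact: (proj2_sig (constructive_indefinite_description _ (exists_span G))).2. Qed.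

Lemma span_mul_min G (a : 'M[F]_n) N :
  (forall v, G v -> (v *m a <= N)%MS) -> (span G *m a <= N)%MS.
Proof.
move=> GaN; have: (span G <= kermx (a *m cokermx N))%MS.
  by apply: span_min => v Gv; rewrite sub_kermx mulmxA -submxE GaN.
by rewrite sub_kermx mulmxA -submxE.
Qed.

End Span.

Section PowerSpaces.

Variables (F : fieldType) (n k : nat) (S : 'M[F]_n.+1 -> Prop).

Definition powrow j (v : 'rV[F]_n.+1) : Prop := exists y s,
  [/\ size s = j, {in s, forall a, S a} & v = y *m \prod_(a <- s) a].

Definition powspace j : 'M[F]_n.+1 := span (powrow j).

Lemma powrow_mul j u a : powrow j u -> S a -> powrow j.+1 (u *m a).
Proof.
move=> [y [s [sz_s Ss ->]]] Sa; exists y, (rcons s a).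
rewrite size_rcons sz_s mulmx_prod_rcons; split=> // b.
by rewrite mem_rcons in_cons => /orP[/eqP -> | /Ss].
Qed.

Lemma powrowS j v : powrow j.+1 v -> exists u a, [/\ powrow j u, S a & v = u *m a].
Proof.
case=> y [s []]; case/lastP: s => [// | s a]; rewrite size_rcons => -[sz_s] Ss ->.
exists (y *m \prod_(b <- s) b), a; rewrite mulmx_prod_rcons; split=> //.
- by exists y, s; split=> // b s_b; apply: Ss; rewrite mem_rcons in_cons s_b orbT.
- by apply: Ss; rewrite mem_rcons mem_head.
Qed.

Lemma powspace0 : (1%:M <= powspace 0)%MS.
Proof.
apply/row_subP => i; apply: span_sub.
by exists (row i 1%:M), [::]; rewrite big_nil mulmx1.
Qed.

Lemma powspaceM j a : S a -> (powspace j *m a <= powspace j.+1)%MS.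
Proof. by move=> Sa; apply: span_mul_min => v /powrow_mul/(_ Sa)/span_sub. Qed.

Lemma powspaceS_sub i j :
  (powspace i <= powspace j)%MS -> (powspace i.+1 <= powspace j.+1)%MS.
Proof.
move=> Wij; apply: span_min => _ /powrowS[u [a [/span_sub Wu Sa ->]]].
exact: submx_trans (submxMr a (submx_trans Wu Wij)) (powspaceM j Sa).
Qed.

Lemma powspaceS j : (powspace j.+1 <= powspace j)%MS.
Proof.
elim: j => [|j IHj]; last exact: powspaceS_sub.
exact: submx_trans (submx1 _) powspace0.
Qed.

Lemma powspace_decr i j : (i <= j)%N -> (powspace j <= powspace i)%MS.
Proof.
move/subnK <-; elim: (j - i)%N => [|d IHd]; first by rewrite add0n.
exact: submx_trans (powspaceS _) IHd.
Qed.

Hypothesis nilS : nilpotent_of_degree S k.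

Lemma powspace_deg : powspace k = 0.
Proof.
have [_ _ Sk _] := (nilpotent_of_degreeP S k).1 nilS.
apply/eqP; rewrite -submx0; apply: span_min => _ [y [s [sz_s Ss ->]]].
by rewrite Sk // mulmx0 sub0mx.
Qed.

Lemma powspace_pred_neq0 : powspace k.-1 != 0.
Proof.
have [_ _ _ [s [sz_s Ss nz_s]]] := (nilpotent_of_degreeP S k).1 nilS.
have /row_subPn[i nz_i] : ~~ (\prod_(a <- s) a <= (0 : 'M[F]_n.+1))%MS.
  by rewrite submx0.
apply: contraNneq nz_i => W0; rewrite -W0; apply: span_sub.
by exists (row i 1%:M), s; rewrite -row_mul mul1mx.
Qed.

Lemma powspace_strict j : (j < k)%N -> (powspace j.+1 < powspace j)%MS.
Proof.
move=> ltjk; rewrite ltmxE powspaceS /=; apply/negP => Wj.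
have stable d : (powspace (j + d) <= powspace (j + d).+1)%MS.
  by elim: d => [|d IHd]; rewrite ?addn0 // addnS; apply: powspaceS_sub.
have up d : (powspace j <= powspace (j + d))%MS.
  elim: d => [|d IHd]; first by rewrite addn0.
  by rewrite addnS (submx_trans IHd (stable d)).
have lejk : (j <= k.-1)%N by lia.
have := submx_trans (powspace_decr lejk) (up (k - j)%N).
by rewrite subnKC ?(ltnW ltjk) // powspace_deg submx0 (negbTE powspace_pred_neq0).
Qed.

Lemma powspace_flag : is_flag (fun i => powspace (k - i)) k.
Proof.
split; [|split].
- by rewrite subn0 powspace_deg submx_refl.
- by rewrite subnn submx1 powspace0.
- move=> i ltik; rewrite -(subnSK ltik) powspace_strict //; lia.
Qed.

Lemma powspace_phi a : S a -> phi (fun i => powspace (k - i)) k a.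
Proof.
move=> Sa i /andP[i_gt0 leik].
by rewrite (_ : k - i.-1 = (k - i).+1)%N ?powspaceM //; lia.
Qed.

End PowerSpaces.

Theorem proposition8 (F : fieldType) (n k : nat) (hk : (2 <= k)%N) :
  (forall V : nat -> 'M[F]_n.+1, is_flag V k -> k_maximal (phi V k) k) /\
  (forall S : 'M[F]_n.+1 -> Prop, k_maximal S k ->
     exists V : nat -> 'M[F]_n.+1, is_flag V k /\ forall a, S a <-> phi V k a).
Proof.
have k_gt0 : (0 < k)%N by apply: ltnW.
split=> [V flagV | S [nilS maxS]].
  by split; [exact: phi_nilpotent | exact: phi_maximal].
exists (fun i => powspace S (k - i)); split; first exact: powspace_flag.
move=> a; split; first exact: powspace_phi.
by apply: maxS; [exact: phi_nilpotent (powspace_flag nilS) k_gt0 | exact: powspace_phi].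
Qed.
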